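(* Let $\Gamma$ be a totally ordered group, let $\mathcal{G}$ be a $\Gamma$-graded ample Hausdorff groupoid with continuous cocycle $c:\mathcal{G}\to\Gamma$, and let $R$ be a field. If the Steinberg algebra $A_R(\mathcal{G})$ is a left SF-ring, then the unit space $\mathcal{G}^{(0)}$ is $\Gamma$-aperiodic, i.e. for every $u\in\mathcal{G}^{(0)}$ one has $c(x)=\varepsilon$ for all $x\in\mathcal{G}_u^u$.
   Context: A topological groupoid $\mathcal{G}$ has domain and range maps $d(x)=x^{-1}x$, $r(x)=xx^{-1}$ and unit space $\mathcal{G}^{(0)}=d(\mathcal{G})$. It is étale if $d$ is a local homeomorphism; an open bisection is an open $U\subseteq\mathcal{G}$ with $d|_U,r|_U$ homeomorphisms onto open subsets of $\mathcal{G}^{(0)}$; $\mathcal{G}$ is ample if it is étale with a basis of compact open bisections. For a discrete group $\Gamma$ with identity $\varepsilon$, a $\Gamma$-grading of $\mathcal{G}$ is a continuous map $c:\mathcal{G}\to\Gamma$ with $c(gh)=c(g)c(h)$ for composable $g,h$. The isotropy group at $u$ is $\mathcal{G}_u^u=\{\gamma: d(\gamma)=r(\gamma)=u\}$; $u$ is $\Gamma$-aperiodic if $\mathcal{G}_u^u\subseteq c^{-1}(\varepsilon)$. The Steinberg algebra $A_R(\mathcal{G})$ is the $R$-algebra of compactly supported locally constant functions $\mathcal{G}\to R$ with pointwise addition and convolution $(f*g)(\gamma)=\sum_{\gamma=\alpha\beta}f(\alpha)g(\beta)$; it is a ring with local units. For a ring $A$ with local units, $A$ is a left SF-ring if every simple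 unital left $A$-module $N$ (unital meaning $AN=N$) is flat, i.e. $-\otimes_A N$ is exact on the category of unital right $A$-modules. *)

From HB Require Import structures.
From mathcomp Require Import all_boot all_order all_algebra.
From Stdlib Require Import ClassicalEpsilon List.
Set Implicit Arguments. Unset Strict Implicit. Unset Printing Implicit Defensive.
Import GRing.Theory.
Local Open Scope ring_scope.

Record OrderedGroup := {
  og :> Type;
  ogmul : og -> og -> og;
  ogone : og;
  oginv : og -> og;
  ogmulA : forall a b c, ogmul (ogmul a b) c = ogmul a (ogmul b c);
  ogmul1g : forall a, ogmul ogone a = a;
  ogmulg1 : forall a, ogmul a ogone = a;
  ogmulVg : forall a, ogmul (oginv a) a = ogone;
  ogmulgV : forall a, ogmul a (oginv a) = ogone;
  ogle : og -> og -> Prop;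
  ogle_refl : forall a, ogle a a;
  ogle_anti : forall a b, ogle a b -> ogle b a -> a = b;
  ogle_trans : forall a b c, ogle a b -> ogle b c -> ogle a c;
  ogle_total : forall a b, ogle a b \/ ogle b a;
  ogle_mull : forall a b c, ogle a b -> ogle (ogmul c a) (ogmul c b);
  ogle_mulr : forall a b c, ogle a b -> ogle (ogmul a c) (ogmul b c)
}.

(* Groupoids (Renault's axioms): gcomp x y means (x,y) is composable. *)
Record Groupoid := {
  gcar :> Type;
  gcomp : gcar -> gcar -> Prop;
  gmul : gcar -> gcar -> gcar;
  ginv : gcar -> gcar;
  ginvK : forall x, ginv (ginv x) = x;
  gcompA : forall x y z, gcomp x y -> gcomp y z ->
     [/\ gcomp (gmul x y) z, gcomp x (gmul y z) &
         gmul (gmul x y) z = gmul x (gmul y z)];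
  gcompVx : forall x, gcomp (ginv x) x;
  gmulKV : forall x y, gcomp x y -> gmul (ginv x) (gmul x y) = y;
  gmulKr : forall x y, gcomp x y -> gmul (gmul x y) (ginv y) = x
}.

Section GroupoidDefs.
Variable G : Groupoid.
Definition gdom (x : G) : G := gmul (ginv x) x.
Definition grng (x : G) : G := gmul x (ginv x).
Definition unit_space (u : G) : Prop := exists x, u = gdom x.
End GroupoidDefs.

(* Topological groupoids: a topology (given by its open sets) making
   inversion continuous and multiplication continuous on G^(2)
   (with the relative product topology). *)
Record TopGroupoid := {
  tgr :> Groupoid;
  topen : (tgr -> Prop) -> Prop;
  topen_full : topen (fun _ => True);
  topen_inter : forall U V, topen U -> topen V -> topen (fun x => U x /\ V x);
  topen_union : forall (I : Type) (F : I -> tgr -> Prop),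
      (forall i, topen (F i)) -> topen (fun x => exists i, F i x);
  tinv_cont : forall W, topen W -> topen (fun x => W (ginv x));
  tmul_cont : forall W, topen W -> forall x y, gcomp x y -> W (gmul x y) ->
      exists U V, [/\ topen U, topen V, U x, V y &
        forall a b, U a -> V b -> gcomp a b -> W (gmul a b)]
}.

Section TopDefs.
Variable G : TopGroupoid.
Notation op := (@topen G).

Definition open_in_units (S : G -> Prop) : Prop :=
  (forall u, S u -> unit_space u) /\
  exists O, op O /\ forall u, unit_space u -> (S u <-> O u).

Definition image (phi : G -> G) (V : G -> Prop) : G -> Prop :=
  fun y => exists x, V x /\ y = phi x.

Definition homeo_onto_open_units (phi : G -> G) (U : G -> Prop) : Prop :=
  [/\ forall x y, U x -> U y -> phi x = phi y -> x = y,
      forall O, op O -> op (fun x => U x /\ O (phi x)),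
      open_in_units (image phi U) &
      forall V, op V -> (forall x, V x -> U x) -> open_in_units (image phi V)].

Definition etale : Prop :=
  forall x : G, exists U, [/\ op U, U x & homeo_onto_open_units (@gdom G) U].

Definition open_bisection (U : G -> Prop) : Prop :=
  [/\ op U, homeo_onto_open_units (@gdom G) U & homeo_onto_open_units (@grng G) U].

Definition compact (K : G -> Prop) : Prop :=
  forall (I : Type) (F : I -> G -> Prop), (forall i, op (F i)) ->
    (forall x, K x -> exists i, F i x) ->
    exists l : list I, forall x, K x -> exists i, In i l /\ F i x.

Definition ample : Prop :=
  etale /\ forall W (x : G), op W -> W x ->
    exists B, [/\ open_bisection B, compact B, B x & forall y, B y -> W y].

Definition hausdorff : Prop :=
  forall x y : G, x <> y -> exists U V,
    [/\ op U, op V, U x, V y & forall z, ~ (U z /\ V z)].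

Definition closure (S : G -> Prop) : G -> Prop :=
  fun x => forall U, op U -> U x -> exists y, U y /\ S y.

(* Gamma-grading: continuous (Gamma discrete) cocycle *)
Definition grading (Gam : OrderedGroup) (c : G -> Gam) : Prop :=
  (forall t, op (fun x => c x = t)) /\
  (forall x y, gcomp x y -> c (gmul x y) = ogmul (c x) (c y)).

Definition aperiodic_unit (Gam : OrderedGroup) (c : G -> Gam) (u : G) : Prop :=
  forall x, gdom x = u -> grng x = u -> c x = ogone Gam.

Variable R : fieldType.

Definition locally_constant (f : G -> R) : Prop :=
  forall x, exists U, [/\ op U, U x & forall y, U y -> f y = f x].

Definition in_steinberg (f : G -> R) : Prop :=
  locally_constant f /\ compact (closure (fun x => f x != 0)).

Definition fadd (f g : G -> R) : G -> R := fun x => f x + g x.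

Definition conv_value (f g : G -> R) (gam : G) (s : R) : Prop :=
  exists l : list (G * G)%type, [/\ NoDup l,
     forall p, In p l -> gcomp p.1 p.2 /\ gmul p.1 p.2 = gam,
     forall a b, gcomp a b -> gmul a b = gam -> f a * g b != 0 -> In (a, b) l &
     s = \sum_(p <- l) f p.1 * g p.2].

Definition conv (f g : G -> R) : G -> R :=
  fun gam => epsilon (inhabits (0 : R)) (conv_value f g gam).

Definition left_module (N : zmodType) (act : (G -> R) -> N -> N) : Prop :=
  [/\ forall f g n, in_steinberg f -> in_steinberg g ->
        act (fadd f g) n = act f n + act g n,
      forall f n n', in_steinberg f -> act f (n + n') = act f n + act f n' &
      forall f g n, in_steinberg f -> in_steinberg g ->
        act (conv f g) n = act f (act g n)].

Definition right_module (M : zmodType) (ract : M -> (G -> R) -> M) : Prop :=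
  [/\ forall f g m, in_steinberg f -> in_steinberg g ->
        ract m (fadd f g) = ract m f + ract m g,
      forall f m m', in_steinberg f -> ract (m + m') f = ract m f + ract m' f &
      forall f g m, in_steinberg f -> in_steinberg g ->
        ract m (conv f g) = ract (ract m f) g].

(* unital: A N = N *)
Definition left_unital (N : zmodType) (act : (G -> R) -> N -> N) : Prop :=
  forall n : N, exists l : list ((G -> R) * N)%type,
    (forall p, In p l -> in_steinberg p.1) /\ n = \sum_(p <- l) act p.1 p.2.

Definition right_unital (M : zmodType) (ract : M -> (G -> R) -> M) : Prop :=
  forall m : M, exists l : list (M * (G -> R))%type,
    (forall p, In p l -> in_steinberg p.2) /\ m = \sum_(p <- l) ract p.1 p.2.

Definition left_submodule (N : zmodType) (act : (G -> R) -> N -> N)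
    (S : N -> Prop) : Prop :=
  [/\ S 0, forall n n', S n -> S n' -> S (n + n'), forall n, S n -> S (- n) &
      forall f n, in_steinberg f -> S n -> S (act f n)].

Definition simple_left (N : zmodType) (act : (G -> R) -> N -> N) : Prop :=
  (exists n : N, n <> 0) /\
  forall S, left_submodule act S -> (forall n, S n -> n = 0) \/ (forall n, S n).

Definition right_linear (M M' : zmodType) (ract : M -> (G -> R) -> M)
    (ract' : M' -> (G -> R) -> M') (phi : M -> M') : Prop :=
  (forall m m', phi (m + m') = phi m + phi m') /\
  (forall m f, in_steinberg f -> phi (ract m f) = ract' (phi m) f).

Definition balanced (M N Z : zmodType) (ract : M -> (G -> R) -> M)
    (act : (G -> R) -> N -> N) (beta : M -> N -> Z) : Prop :=
  [/\ forall m m' n, beta (m + m') n = beta m n + beta m' n,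
      forall m n n', beta m (n + n') = beta m n + beta m n' &
      forall m f n, in_steinberg f -> beta (ract m f) n = beta m (act f n)].

(* The element  sum_i m_i (x) n_i  of M (x)_A N is zero; the tensor product
   is given by its universal property w.r.t. balanced maps. *)
Definition tensor_zero (M N : zmodType) (ract : M -> (G -> R) -> M)
    (act : (G -> R) -> N -> N) (l : list (M * N)%type) : Prop :=
  forall (Z : zmodType) (beta : M -> N -> Z), balanced ract act beta ->
    \sum_(p <- l) beta p.1 p.2 = 0.

Definition tmap (M M' N : zmodType) (phi : M -> M') (l : list (M * N)%type)
  : list (M' * N)%type := map (fun p => (phi p.1, p.2)) l.

Definition tneg (M N : zmodType) (l : list (M * N)%type) : list (M * N)%type :=
  map (fun p => (- p.1, p.2)) l.

(* flat: - (x)_A N is exact on unital right A-modules, i.e. sends every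
   sequence M1 -phi-> M2 -psi-> M3 exact at M2 to one exact at M2 (x) N *)
Definition flat_left (N : zmodType) (act : (G -> R) -> N -> N) : Prop :=
  forall (M1 M2 M3 : zmodType) (r1 : M1 -> (G -> R) -> M1)
    (r2 : M2 -> (G -> R) -> M2) (r3 : M3 -> (G -> R) -> M3)
    (phi : M1 -> M2) (psi : M2 -> M3),
    right_module r1 -> right_unital r1 ->
    right_module r2 -> right_unital r2 ->
    right_module r3 -> right_unital r3 ->
    right_linear r1 r2 phi -> right_linear r2 r3 psi ->
    (forall m : M2, (exists m1, m = phi m1) <-> psi m = 0) ->
    forall t : list (M2 * N)%type,
      (exists s : list (M1 * N)%type, tensor_zero r2 act (tmap phi s ++ tneg t))
      <-> tensor_zero r3 act (tmap psi t).

Definition left_SF : Prop :=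
  forall (N : zmodType) (act : (G -> R) -> N -> N),
    left_module act -> left_unital act -> simple_left act -> flat_left act.

End TopDefs.

(* Suppose x is an isotropy arrow at u with c(x) <> ε.  Let N be the module of
   finitely supported functions on the orbit of u (it is simple and unital)
   and M the unital right module of finitely supported functions on d^-1(u),
   on which right translation rho by x is a module endomorphism.  As Γ is
   totally ordered, c(x) has infinite order, so the arrows h x^-n are pairwise
   distinct and psi = rho - 1 is injective on M.  Flatness of N then makes
   psi ⊗ N injective.  But for a compact open bisection B containing x^-1,
   psi(δ_u) ⊗ δ_u = δ_u 1_B ⊗ δ_u - δ_u ⊗ δ_u = δ_u ⊗ 1_B δ_u - δ_u ⊗ δ_u = 0,
   whereas the balanced pairing β(m, n) = Σ_{h ∈ d^-1(u)} m(h) n(r(h)) gives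
   β(δ_u, δ_u) = 1. *)

From Pilot Require Import Defs.
From Stdlib Require Import ClassicalEpsilon List.
From HB Require Import structures.
From mathcomp Require Import all_boot all_order all_algebra.
From mathcomp Require Import finmap boolp classical_sets functions cardinality fsbigop.
Set Implicit Arguments. Unset Strict Implicit. Unset Printing Implicit Defensive.
Import GRing.Theory.
Local Open Scope ring_scope.
Local Open Scope classical_set_scope.

Section GroupoidTheory.
Variable G : Groupoid.
Implicit Types a b x y : G.
Local Notation mul := (@gmul G).
Local Notation inv := (@ginv G).

Lemma gcompxV x : gcomp x (inv x).
Proof. by have := gcompVx (inv x); rewrite ginvK. Qed.

Lemma gmul_gdom x : mul x (gdom x) = x.
Proof. by have := gmulKV (gcompVx x); rewrite ginvK. Qed.

Lemma gmul_grng x : mul (grng x) x = x.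
Proof. by have := gmulKr (gcompxV x); rewrite ginvK. Qed.

Lemma gcomp_dom_rng a b : gcomp a b -> gdom a = grng b.
Proof.
move=> hab.
have [_ h1 _] := gcompA (gcompVx a) hab.
have [h2 _ _] := gcompA hab (gcompxV b).
have [_ _ e] := gcompA h1 h2.
by move: e; rewrite gmulKV // gmulKr.
Qed.

Lemma gcompP a b : gcomp a b <-> gdom a = grng b.
Proof.
split=> [|e]; first exact: gcomp_dom_rng.
have [_ h1 _] := gcompA (gcompxV a) (gcompVx a).
have [h2 _ _] := gcompA (gcompxV b) (gcompVx b).
have h1' : gcomp a (grng b) by rewrite -e.
rewrite -[b]gmul_grng; by have [_ ? _] := gcompA h1' h2.
Qed.

Lemma gdomV x : gdom (inv x) = grng x.
Proof. by rewrite /gdom /grng ginvK. Qed.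

Lemma grngV x : grng (inv x) = gdom x.
Proof. by rewrite /gdom /grng ginvK. Qed.

Lemma gdomM a b : gcomp a b -> gdom (mul a b) = gdom b.
Proof.
move=> hab; have [h _ _] := gcompA hab (gcompxV b).
by rewrite (gcomp_dom_rng h) grngV.
Qed.

Lemma grngM a b : gcomp a b -> grng (mul a b) = grng a.
Proof.
move=> hab; have [_ h _] := gcompA (gcompVx a) hab.
by rewrite -(gcomp_dom_rng h) gdomV.
Qed.

Lemma gmulA a b c : gcomp a b -> gcomp b c -> mul (mul a b) c = mul a (mul b c).
Proof. by move=> h1 h2; have [_ _ ->] := gcompA h1 h2. Qed.

Lemma gdom_idem x : gdom (gdom x) = gdom x.
Proof. exact: gdomM (gcompVx x). Qed.

Lemma grng_gdom x : grng (gdom x) = gdom x.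
Proof. by rewrite [in LHS]/gdom (grngM (gcompVx x)) grngV. Qed.

Lemma grng_idem x : grng (grng x) = grng x.
Proof. exact: grngM (gcompxV x). Qed.

Lemma unit_spaceP x : unit_space x <-> gdom x = x.
Proof. by split=> [[y ->]|e]; [exact: gdom_idem | exists x; rewrite e]. Qed.

Lemma unit_space_grng x : unit_space x -> grng x = x.
Proof. by case=> y ->; rewrite grng_gdom. Qed.

Lemma unit_space_of_grng x : unit_space (grng x).
Proof. by exists (inv x); rewrite /gdom /grng ginvK. Qed.

Lemma gmulI a b b' : gcomp a b -> gcomp a b' -> mul a b = mul a b' -> b = b'.
Proof. by move=> h h' e; rewrite -(gmulKV h) e gmulKV. Qed.

Lemma ginv_inj : injective inv.
Proof. by move=> x y e; rewrite -(ginvK x) e ginvK. Qed.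

Lemma ginvM a b : gcomp a b -> inv (mul a b) = mul (inv b) (inv a).
Proof.
move=> hab; have e := gcomp_dom_rng hab.
have hba : gcomp (inv b) (inv a) by apply/gcompP; rewrite gdomV grngV.
have h2 : gcomp (mul a b) (mul (inv b) (inv a)).
  by apply/gcompP; rewrite (gdomM hab) (grngM hba) grngV.
apply: (gmulI (gcompxV _) h2).
have hbba : gcomp b (mul (inv b) (inv a)).
  by apply/gcompP; rewrite (grngM hba) grngV.
rewrite -/(grng _) (grngM hab) (gmulA hab hbba) -(gmulA (gcompxV b) hba).
by rewrite -/(grng b) -e -(grngV a) gmul_grng.
Qed.

Lemma gmulKVr a k : grng a = grng k -> mul a (mul (inv a) k) = k.
Proof.
move=> e; have c1 : gcomp (inv a) k by apply/gcompP; rewrite gdomV.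
rewrite -gmulA -/(grng a) ?e ?gmul_grng //; exact: gcompxV.
Qed.

End GroupoidTheory.

Lemma In_mem (T : eqType) (x : T) (l : seq T) : In x l <-> x \in l.
Proof.
elim: l => [|y l IH] //=; rewrite in_cons; split.
- by case=> [->|/IH ->]; rewrite ?eqxx ?orbT.
- by case/orP=> [/eqP ->|/IH]; [left|right].
Qed.

Lemma NoDup_uniq (T : eqType) (l : seq T) : NoDup l <-> uniq l.
Proof.
elim: l => [|y l IH] /=; first by split=> // _; constructor.
split.
- move=> h; inversion h; subst; apply/andP; split; last exact/IH.
  by apply/negP => /In_mem.
- by case/andP=> h1 h2; constructor; [move/In_mem; apply/negP | apply/IH].
Qed.

Section Topology.
Variable G : TopGroupoid.
HB.instance Definition _ := gen_eqMixin (gcar (tgr G)).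
HB.instance Definition _ := gen_choiceMixin (gcar (tgr G)).
Local Notation op := (@topen G).

Lemma topen_ext (S S' : G -> Prop) : (forall x, S x <-> S' x) -> op S -> op S'.
Proof. by move=> h; have -> : S = S' by apply/funext => x; apply/propext. Qed.

Lemma topen_bigI (I : Type) (l : seq I) (F : I -> G -> Prop) :
  (forall i, op (F i)) -> op (fun x => forall i, In i l -> F i x).
Proof.
move=> hF; elim: l => [|i l IH]; first by apply: topen_ext (topen_full G).
apply: topen_ext (topen_inter (hF i) IH) => x /=; split.
- by case=> h1 h2 j [<-|/h2].
- by move=> h; split=> [|j hj]; apply: h; [left|right].
Qed.

Section Hausdorff.
Hypothesis Hhaus : hausdorff G.

Lemma compact_nbhs_compl (K : G -> Prop) x : compact K -> ~ K x ->
  exists U, [/\ op U, U x & forall z, U z -> ~ K z].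
Proof.
move=> cK nKx.
have hs : forall b : {b : G | K b}, exists UV : (G -> Prop) * (G -> Prop),
    [/\ op UV.1, op UV.2, UV.1 x, UV.2 (sval b) & forall z, ~ (UV.1 z /\ UV.2 z)].
  move=> [b Kb] /=; have nxb : x <> b by move=> e; apply: nKx; rewrite e.
  by have [U [V [? ? ? ? ?]]] := Hhaus nxb; exists (U, V).
have [f hf] := choice hs.
have [l hl] := cK _ (fun i => (f i).2) (fun i => let: And5 _ h _ _ _ := hf i in h)
  (fun y Ky => ex_intro _ (exist _ y Ky) (let: And5 _ _ _ h _ := hf (exist _ y Ky) in h)).
exists (fun z => forall i, In i l -> (f i).1 z); split.
- by apply: topen_bigI => i; case: (hf i).
- by move=> i _; case: (hf i).
- move=> z hz Kz; have [i [il hi]] := hl z Kz.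
  by case: (hf i) => _ _ _ _ /(_ z); apply; split; [exact: hz | exact: hi].
Qed.

Lemma finite_set_isolated (S : set G) w : finite_set S ->
  exists V, [/\ op V, V w & forall z, V z -> S z -> z = w].
Proof.
move=> fS.
have hs : forall y, exists U : G -> Prop, y <> w ->
    [/\ op U, U w & ~ U y].
  move=> y; case: (pselect (y = w)) => [-> | ne]; first by exists (fun _ => True).
  have [U [V [oU _ Uw Vy dUV]]] := Hhaus (nesym ne).
  by exists U => _; split=> // Uy; apply: (dUV y).
have [U hU] := choice hs.
pose F y z := if `[< y <> w >] then U y z else True.
exists (fun z => forall y, In y (fset_set S) -> F y z); split.
- apply: topen_bigI => y; rewrite /F; case: (pselect (y = w)) => [e|ne].
    by apply: topen_ext (topen_full G) => z; rewrite asboolF.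
  by case: (hU y ne) => oU _ _; apply: topen_ext oU => z; rewrite asboolT.
- move=> y _; rewrite /F; case: (pselect (y = w)) => [e|ne]; first by rewrite asboolF.
  by rewrite asboolT //; case: (hU y ne).
- move=> z Vz Sz; apply: contrapT => ne.
  have := Vz z; rewrite /F asboolT // => /(_ _)/wrap[].
    by apply/In_mem; rewrite in_fset_set //; apply/mem_set.
  by case: (hU z ne).
Qed.

End Hausdorff.

Definition compact_bisection (B : G -> Prop) := open_bisection B /\ compact B.

Section CompactBisection.
Variable B : G -> Prop.
Hypothesis hB : compact_bisection B.

Lemma cbis_open : op B.
Proof. by case: hB => -[]. Qed.

Lemma cbis_grng_inj x y : B x -> B y -> grng x = grng y -> x = y.
Proof. by case: hB => -[_ _ [inj _ _ _]] _; apply: inj. Qed.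

Lemma cbis_gdom_inj x y : B x -> B y -> gdom x = gdom y -> x = y.
Proof. by case: hB => -[_ [inj _ _ _] _] _; apply: inj. Qed.

Lemma cbis_gdom_open O : op O -> op (fun x => B x /\ O (gdom x)).
Proof. by case: hB => -[_ [_ dcont _ _] _] _; apply: dcont. Qed.

End CompactBisection.

Section Ample.
Hypothesis Hample : ample G.

Lemma ample_cbis W x : op W -> W x ->
  exists B, [/\ compact_bisection B, B x & forall y, B y -> W y].
Proof.
by move=> oW Wx; have [B [? ? ? ?]] := Hample.2 W x oW Wx; exists B; split.
Qed.

Lemma cbis_cover x : exists B, compact_bisection B /\ B x.
Proof. by have [B [? ? _]] := @ample_cbis (fun=> True) x (topen_full G) I; exists B. Qed.

Lemma compact_fibre_finite (K : G -> Prop) (p : G -> G) : compact K ->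
  (forall B, compact_bisection B -> forall x y, B x -> B y -> p x = p y -> x = y) ->
  forall v, finite_set [set g | K g /\ p g = v].
Proof.
move=> cK pinj v.
have [f hf] := choice (fun b : {b : G | K b} => cbis_cover (sval b)).
have [l hl] := cK _ f (fun i => cbis_open (hf i).1)
  (fun y Ky => ex_intro _ (exist _ y Ky) (hf (exist _ y Ky)).2).
pose pick i := xget v [set g | f i g /\ p g = v].
apply: (sub_finite_set (B := [set` map pick l])) => // g [Kg pg].
have [i [il hi]] := hl g Kg.
have [h1 h2] := xgetPex v (ex_intro (fun g => f i g /\ p g = v) g (conj hi pg)).
have -> : g = pick i by apply: (pinj _ (hf i).1) => //; rewrite pg.
by apply/In_mem; apply: in_map.
Qed.

End Ample.
End Topology.

Section FiniteSupportSums.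
Variable V : nmodType.

Lemma fsbig_setI_supp (T : choiceType) (P A : set T) (F : T -> V) :
  (forall i, P i -> F i != 0 -> A i) ->
  \sum_(i \in P) F i = \sum_(i \in P `&` A) F i.
Proof.
move=> h; apply/esym/fsbig_widen => // i [Pi nPA] /=.
by apply/eqP/negP => /negP nz; apply: nPA; split => //; exact: h.
Qed.

Lemma fsbig_neq0 (T : choiceType) (P : set T) (F : T -> V) :
  \sum_(i \in P) F i != 0 -> exists2 i, P i & F i != 0.
Proof. exact: (@fsbigN1 V 0 +%R unit T P (fun _ => F) tt). Qed.

Lemma fsbig2_setI_supp (I J : choiceType) (P : set I) (Q : set J)
    (F : I -> J -> V) (A : set I) (B : set J) :
  (forall i j, P i -> Q j -> F i j != 0 -> A i /\ B j) ->
  \sum_(i \in P) \sum_(j \in Q) F i j =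
  \sum_(i \in P `&` A) \sum_(j \in Q `&` B) F i j.
Proof.
move=> h.
rewrite (eq_fsbigr (fun i => \sum_(j \in Q `&` B) F i j)); last first.
  by move=> i /set_mem Pi; apply: fsbig_setI_supp => j Qj nz; case: (h i j Pi Qj nz).
apply: fsbig_setI_supp => i Pi /fsbig_neq0 [j [Qj Bj] nz].
by case: (h i j Pi Qj nz).
Qed.

Lemma exchange_fsbig_supp (I J : choiceType) (P : set I) (Q : set J)
    (F : I -> J -> V) (A : set I) (B : set J) :
  finite_set A -> finite_set B ->
  (forall i j, P i -> Q j -> F i j != 0 -> A i /\ B j) ->
  \sum_(i \in P) \sum_(j \in Q) F i j = \sum_(j \in Q) \sum_(i \in P) F i j.
Proof.
move=> fA fB h; rewrite (fsbig2_setI_supp h).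
rewrite (@fsbig2_setI_supp J I Q P (fun j i => F i j) B A); last first.
  by move=> j i Qj Pi nz; have [] := h i j Pi Qj nz.
by apply: exchange_fsbig; apply: finite_setIr.
Qed.

Lemma fsbig_split_supp (T : choiceType) (P A : set T) (F H : T -> V) :
  finite_set A ->
  (forall i, P i -> F i != 0 -> A i) -> (forall i, P i -> H i != 0 -> A i) ->
  \sum_(i \in P) (F i + H i) = \sum_(i \in P) F i + \sum_(i \in P) H i.
Proof.
move=> fA hF hH.
rewrite (fsbig_setI_supp hF) (fsbig_setI_supp hH) (@fsbig_setI_supp T P A).
  by rewrite fsbig_split //; apply: finite_setIr.
move=> i Pi nz; case: (eqVneq (F i) 0) => [e|]; last exact: hF.
by apply: hH => //; move: nz; rewrite e add0r.
Qed.

Lemma fsbig_single (T : choiceType) (P : set T) (F : T -> V) x0 :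
  P x0 -> (forall i, P i -> i <> x0 -> F i = 0) -> \sum_(i \in P) F i = F x0.
Proof.
move=> Px0 h; rewrite (@fsbig_setI_supp T P [set x0]); last first.
  by move=> i Pi nz; apply: contrapT => ne; move/eqP: nz; apply; apply: h.
have -> : P `&` [set x0] = [set x0] by apply/seteqP; split=> [i [_ ->]|i ->].
by rewrite fsbig_set1.
Qed.

Lemma reindex_fsbig_bij (I J : choiceType) (P : set I) (Q : set J)
    (h : I -> J) (F : J -> V) :
  (forall i, P i -> Q (h i)) ->
  (forall i i', P i -> P i' -> h i = h i' -> i = i') ->
  (forall j, Q j -> exists i, P i /\ h i = j) ->
  \sum_(j \in Q) F j = \sum_(i \in P) F (h i).
Proof.
move=> h1 h2 h3; apply: reindex_fsbig; split.
- by move=> i /h1.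
- by move=> i i' /set_mem Pi /set_mem Pi'; apply: h2.
- by move=> j /h3 [i [Pi e]]; exists i.
Qed.

End FiniteSupportSums.

Section Steinberg.
Variables (G : TopGroupoid) (R : fieldType).
Local Notation op := (@topen G).
Local Notation mul := (@gmul G).
Local Notation inv := (@ginv G).

Definition fin_fibres (f : G -> R) :=
  (forall v, finite_set [set g | f g != 0 /\ grng g = v]) /\
  (forall v, finite_set [set g | f g != 0 /\ gdom g = v]).

Lemma fin_fibresV f : fin_fibres f -> fin_fibres (fun x => f (inv x)).
Proof.
case=> h1 h2; split=> v.
- apply: (sub_finite_set _ (finite_image inv (h2 v))) => g [nz e].
  by exists (inv g); rewrite ?ginvK //; split => //; rewrite gdomV.
- apply: (sub_finite_set _ (finite_image inv (h1 v))) => g [nz e].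
  by exists (inv g); rewrite ?ginvK //; split => //; rewrite grngV.
Qed.

Lemma fin_fibresD f g : fin_fibres f -> fin_fibres g -> fin_fibres (fadd f g).
Proof.
have supp_add (p : G -> G) v : finite_set [set h | f h != 0 /\ p h = v] ->
    finite_set [set h | g h != 0 /\ p h = v] ->
    finite_set [set h | fadd f g h != 0 /\ p h = v].
  move=> ff fg; apply: (@sub_finite_set _ _
    ([set h | f h != 0 /\ p h = v] `|` [set h | g h != 0 /\ p h = v])).
    2: by rewrite finite_setU.
  move=> h [nz e]; case: (eqVneq (f h) 0) => [e0|]; last by left.
  by right; split=> //; move: nz; rewrite /fadd e0 add0r.
by case=> [f1 f2] [g1 g2]; split=> v; apply: supp_add.
Qed.

Lemma closure_supp (f : G -> R) x : f x != 0 -> Defs.closure (fun y => f y != 0) x.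
Proof. by move=> nz U _ Ux; exists x. Qed.

Lemma steinberg_fin_fibres f : ample G -> in_steinberg f -> fin_fibres f.
Proof.
move=> Hample [_ cK]; split=> v.
- apply: sub_finite_set (compact_fibre_finite Hample cK (@cbis_grng_inj G) v).
  by move=> g [nz e]; split=> //; apply: closure_supp.
- apply: sub_finite_set (compact_fibre_finite Hample cK (@cbis_gdom_inj G) v).
  by move=> g [nz e]; split=> //; apply: closure_supp.
Qed.

Definition scaled_indic (a : R) (B : G -> Prop) : G -> R :=
  fun x => if `[< B x >] then a else 0.

Lemma in_steinberg_scaled_indic a B : hausdorff G -> compact_bisection B ->
  in_steinberg (scaled_indic a B).
Proof.
move=> Hhaus oB; split.
  move=> x; case: (pselect (B x)) => Bx.
    exists B; split=> //; first exact: cbis_open.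
    by move=> y By; rewrite /scaled_indic !asboolT.
  have [U [oU Ux hU]] := compact_nbhs_compl Hhaus oB.2 Bx.
  by exists U; split=> // y Uy; rewrite /scaled_indic !asboolF //; exact: hU.
case: (eqVneq a 0) => [->|anz].
  have -> : Defs.closure (fun x => scaled_indic 0 B x != 0) = (fun _ => False).
    apply/funext => x; apply/propext; split=> // h.
    have [y [_]] := h _ (topen_full G) I.
    by rewrite /scaled_indic; case: ifP; rewrite eqxx.
  by move=> I F _ _; exists nil.
have -> : Defs.closure (fun x => scaled_indic a B x != 0) = B.
  apply/funext => x; apply/propext; split=> h; last first.
    by apply: closure_supp; rewrite /scaled_indic asboolT.
  apply: contrapT => Bx.
  have [U [oU Ux hU]] := compact_nbhs_compl Hhaus oB.2 Bx.
  have [y [Uy]] := h U oU Ux.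
  by rewrite /scaled_indic asboolF ?eqxx //; apply: hU.
exact: oB.2.
Qed.

Section ConvolutionFormula.
Variables (f g : G -> R) (gam : G).
Hypothesis fin_rng : forall v, finite_set [set a | f a != 0 /\ grng a = v].

Let factorization := [set p : G * G | gcomp p.1 p.2 /\ mul p.1 p.2 = gam].
Let term (p : G * G) := f p.1 * g p.2.
Let conv_sum := \sum_(a \in [set a | grng a = grng gam]) f a * g (mul (inv a) gam).

Let factorization_left a : grng a = grng gam -> factorization (a, mul (inv a) gam).
Proof.
move=> e; have c1 : gcomp (inv a) gam by apply/gcompP; rewrite gdomV.
split => /=; last exact: gmulKVr.
by apply/gcompP; rewrite (grngM c1) grngV.
Qed.

Let sum_factorization : \sum_(p \in factorization) term p = conv_sum.
Proof.
apply: (@reindex_fsbig_bij _ _ _ [set a | grng a = grng gam] _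
  (fun a => (a, mul (inv a) gam))).
- exact: factorization_left.
- by move=> a a' _ _ [].
- move=> [p1 p2] [/= c e]; exists p1; split => /=; first by rewrite -e (grngM c).
  by rewrite -e gmulKV.
Qed.

Let sum_list (l : seq (G * G)) : NoDup l ->
  (forall p, In p l -> gcomp p.1 p.2 /\ mul p.1 p.2 = gam) ->
  (forall a b, gcomp a b -> mul a b = gam -> f a * g b != 0 -> In (a, b) l) ->
  \sum_(p <- l) term p = conv_sum.
Proof.
move=> /NoDup_uniq nd hin hcov; rewrite fsbig_seq // -sum_factorization.
apply: fsbig_widen; first by move=> p /= /In_mem /hin.
move=> [a b] [[/= c e] nl] /=; apply/eqP/negP => /negP nz.
by apply: nl => /=; apply/In_mem; apply: hcov.
Qed.

Let conv_value_exists : exists s, conv_value f g gam s.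
Proof.
pose D := [set p | factorization p /\ term p != 0].
have fD : finite_set D.
  apply: sub_finite_set (finite_image (fun a => (a, mul (inv a) gam)) (fin_rng (grng gam))).
  move=> [a b] [[/= c e] nz]; exists a => /=; last by rewrite -e gmulKV.
  split; last by rewrite -e (grngM c).
  by apply/negP => /eqP fa; move: nz; rewrite /term /= fa mul0r eqxx.
exists (\sum_(p <- fset_set D) term p), (fset_set D); split => //.
- exact/NoDup_uniq/fset_uniq.
- by move=> p /In_mem; rewrite in_fset_set // => /set_mem [].
- by move=> a b c e nz; apply/In_mem; rewrite in_fset_set //; apply/mem_set.
Qed.

Lemma convE : conv f g gam = conv_sum.
Proof.
have := epsilon_spec (inhabits (0 : R)) _ conv_value_exists.
by rewrite /conv; case=> l [nd hin hcov ->]; apply: sum_list.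
Qed.

End ConvolutionFormula.

Lemma convV (f g : G -> R) : fin_fibres f -> fin_fibres g ->
  (fun y => conv f g (inv y)) = conv (fun y => g (inv y)) (fun y => f (inv y)).
Proof.
move=> hf hg; apply/funext => gam.
rewrite (convE _ _ hf.1) (convE _ _ (fin_fibresV hg).1) grngV.
rewrite (@reindex_fsbig_bij _ _ _ [set al | grng al = gdom gam]
  [set b | grng b = grng gam] (mul gam)).
- apply: eq_fsbigr => al /set_mem /= e; have c1 : gcomp gam al by apply/gcompP.
  have h1 : gcomp (inv al) (inv gam) by apply/gcompP; rewrite gdomV grngV.
  rewrite (ginvM c1) (gmulA h1 (gcompVx gam)) -/(gdom gam) -e -(gdomV al).
  by rewrite gmul_gdom ginvK mulrC.
- by move=> al /= e; rewrite grngM //; apply/gcompP.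
- by move=> al al' /= e1 e2; apply: gmulI; apply/gcompP.
- move=> b /= e; exists (mul (inv gam) b); split; last by rewrite gmulKVr.
  by rewrite /= grngM ?grngV //; apply/gcompP; rewrite gdomV.
Qed.
End Steinberg.

Section FiniteSupport.
Variables (T : choiceType) (R : zmodType) (P : set T).

Definition finsupp_on (xi : T -> R) : Prop :=
  finite_set [set y | xi y != 0] /\ (forall y, xi y != 0 -> P y).

Record finsupp := FinSupp { fs_fun :> T -> R ; fs_funP : `[< finsupp_on fs_fun >] }.
HB.instance Definition _ := [isSub for fs_fun].
HB.instance Definition _ := [Choice of finsupp by <:].

Definition mkfinsupp xi (h : finsupp_on xi) : finsupp := FinSupp (asboolT h).

Lemma finsupp_onP (x : finsupp) : finsupp_on x.
Proof. exact/asboolP/fs_funP. Qed.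

Lemma finsuppP (x y : finsupp) : (forall t, x t = y t) -> x = y.
Proof. by move=> h; apply: val_inj; apply/funext. Qed.

Lemma finsupp_on0 : finsupp_on (fun _ => 0).
Proof.
split; last by move=> y; rewrite eqxx.
apply: (@sub_finite_set _ _ set0); last exact: finite_set0.
by move=> y /=; rewrite eqxx.
Qed.

Lemma finsupp_onD (x y : T -> R) :
  finsupp_on x -> finsupp_on y -> finsupp_on (fun t => x t + y t).
Proof.
move=> [fx px] [fy py]; split.
  apply: (@sub_finite_set _ _ ([set t | x t != 0] `|` [set t | y t != 0])).
    move=> t /= nz; case: (eqVneq (x t) 0) => [e|]; last by left.
    by right; move: nz; rewrite e add0r.
  by rewrite finite_setU.
move=> t nz; case: (eqVneq (x t) 0) => [e|]; last exact: px.
by apply: py; move: nz; rewrite e add0r.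
Qed.

Lemma finsupp_onN (x : T -> R) : finsupp_on x -> finsupp_on (fun t => - x t).
Proof.
move=> [fx px]; split; last by move=> t; rewrite oppr_eq0; apply: px.
by apply: (sub_finite_set _ fx) => t /=; rewrite oppr_eq0.
Qed.

Definition fs_zero : finsupp := mkfinsupp finsupp_on0.
Definition fs_add (x y : finsupp) : finsupp :=
  mkfinsupp (finsupp_onD (finsupp_onP x) (finsupp_onP y)).
Definition fs_opp (x : finsupp) : finsupp := mkfinsupp (finsupp_onN (finsupp_onP x)).

Lemma fs_addA : associative fs_add.
Proof. by move=> x y z; apply: finsuppP => t /=; rewrite addrA. Qed.
Lemma fs_addC : commutative fs_add.
Proof. by move=> x y; apply: finsuppP => t /=; rewrite addrC. Qed.
Lemma fs_add0 : left_id fs_zero fs_add.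
Proof. by move=> x; apply: finsuppP => t /=; rewrite add0r. Qed.
Lemma fs_addN : left_inverse fs_zero fs_opp fs_add.
Proof. by move=> x; apply: finsuppP => t /=; rewrite addNr. Qed.

HB.instance Definition _ := GRing.isZmodule.Build finsupp fs_addA fs_addC fs_add0 fs_addN.

Lemma fs_funD (x y : finsupp) t : (x + y) t = x t + y t.
Proof. by []. Qed.

Lemma fs_fun0 t : (0 : finsupp) t = 0.
Proof. by []. Qed.

Lemma fs_fun_sum (I : Type) (l : seq I) (F : I -> finsupp) t :
  (\sum_(i <- l) F i) t = \sum_(i <- l) F i t.
Proof. by elim: l => [|i l IH]; rewrite ?big_nil ?big_cons ?fs_funD ?IH. Qed.

Lemma finsupp_neq0 (x : finsupp) : x != 0 -> exists t, x t != 0.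
Proof.
move=> nz; apply: contrapT => h; move/eqP: nz; apply; apply: finsuppP => t.
by rewrite fs_fun0; case: (eqVneq (x t) 0) => // nt; exfalso; apply: h; exists t.
Qed.

Lemma insubd_finsupp (xi : T -> R) : finsupp_on xi -> (insubd (0 : finsupp) xi : T -> R) = xi.
Proof. by move=> h; rewrite insubdK //; apply/asboolP. Qed.

Definition delta_fun (c : R) (y : T) : T -> R := fun t => if t == y then c else 0.

Definition fs_delta (c : R) (y : T) : finsupp := insubd (0 : finsupp) (delta_fun c y).

Lemma fs_deltaE c y : P y -> (fs_delta c y : T -> R) = delta_fun c y.
Proof.
move=> Py; rewrite /fs_delta insubd_finsupp //; split.
  apply: (sub_finite_set _ (finite_set1 y)) => t /=.
  by rewrite /delta_fun; case: (eqVneq t y) => [-> //|_]; rewrite eqxx.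
by move=> t; rewrite /delta_fun; case: (eqVneq t y) => [-> //|_]; rewrite eqxx.
Qed.

Lemma sum_delta_fun (s : seq T) (F : T -> R) t : uniq s ->
  \sum_(y <- s) delta_fun (F y) y t = if t \in s then F t else 0.
Proof.
elim: s => [|y s IH] /=; first by rewrite big_nil.
case/andP=> ys us; rewrite big_cons IH // in_cons /delta_fun.
case: (eqVneq t y) => [->|] /=; last by rewrite add0r.
by rewrite (negPf ys) addr0.
Qed.

Lemma finsupp_decomp (x : finsupp) : exists s : seq T,
  (forall y, y \in s -> P y) /\ x = \sum_(y <- s) fs_delta (x y) y.
Proof.
have [fx px] := finsupp_onP x.
have supp y : y \in fset_set [set y | x y != 0] -> x y != 0.
  by rewrite in_fset_set // => /set_mem.
exists (fset_set [set y | x y != 0]); split=> [y /supp /px //|].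
apply: finsuppP => t; rewrite fs_fun_sum.
rewrite (eq_big_seq (fun y => delta_fun (x y) y t)); last first.
  by move=> y /supp /px Py; rewrite fs_deltaE.
rewrite sum_delta_fun ?fset_uniq //; case: ifP => // /negbT tS.
by apply/eqP; apply: contraNT tS => nz; rewrite in_fset_set //; apply/mem_set.
Qed.

End FiniteSupport.

Section AdditiveMap.
Variables (U V : zmodType) (phi : U -> V).
Hypothesis phiD : forall x y, phi (x + y) = phi x + phi y.

Lemma morph_add0 : phi 0 = 0.
Proof. by apply: (addrI (phi 0)); rewrite -phiD !addr0. Qed.

Lemma morph_addN x : phi (- x) = - phi x.
Proof. by apply/eqP; rewrite -addr_eq0 -phiD addNr morph_add0. Qed.

Lemma morph_add_sum (I : Type) (l : seq I) (F : I -> U) :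
  phi (\sum_(i <- l) F i) = \sum_(i <- l) phi (F i).
Proof.
by elim: l => [|i l IH]; rewrite ?big_nil ?morph_add0 // !big_cons phiD IH.
Qed.

End AdditiveMap.

Record gaction (G : Groupoid) (X : Type) := GAction {
  act_set : set X;
  anchor : X -> G;
  act : G -> X -> X;
  act_anchor : forall g y, act_set y -> gdom g = anchor y ->
    act_set (act g y) /\ anchor (act g y) = grng g;
  act_unit : forall y, act_set y -> act (anchor y) y = y;
  actM : forall g h y, act_set y -> gdom h = anchor y -> gdom g = grng h ->
    act (gmul g h) y = act g (act h y)
}.

Section ActionModule.
Variables (G : TopGroupoid) (R : fieldType) (X : choiceType) (A : gaction G X).
Local Notation S := (act_set A).
Local Notation p := (anchor A).
Local Notation a := (act A).
Local Notation mul := (@gmul G).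
Local Notation inv := (@ginv G).
Local Notation M := (finsupp R S).

Definition act_fun (f : G -> R) (xi : X -> R) : X -> R := fun y =>
  if `[< S y >] then \sum_(g \in [set g | grng g = p y]) f g * xi (a (inv g) y)
  else 0.

Lemma act_anchorV g y : S y -> grng g = p y ->
  S (a (inv g) y) /\ p (a (inv g) y) = gdom g.
Proof. by move=> Sy e; rewrite -grngV; apply: act_anchor; rewrite ?gdomV. Qed.

Lemma actK g y : S y -> grng g = p y -> a g (a (inv g) y) = y.
Proof.
by move=> Sy e; rewrite -actM ?gdomV ?grngV // -/(grng g) e act_unit.
Qed.

Lemma act_fun_finsupp f xi : fin_fibres f -> finsupp_on S xi ->
  finsupp_on S (act_fun f xi).
Proof.
move=> [ff1 ff2] [fx px]; split; last first.
  by move=> y; rewrite /act_fun; case: (pselect (S y)) => // nS; rewrite asboolF ?eqxx.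
apply: (@sub_finite_set _ _ (\bigcup_(x in [set x | xi x != 0])
     [set a g x | g in [set g | f g != 0 /\ gdom g = p x]])); last first.
  by apply: bigcup_finite => // x _; apply: finite_image.
move=> y /=; rewrite /act_fun; case: (pselect (S y)) => [Sy|nS]; last first.
  by rewrite asboolF ?eqxx.
rewrite asboolT // => /fsbig_neq0 [g /= e]; rewrite mulf_eq0 negb_or => /andP [fg xg].
have [Sx px'] := act_anchorV Sy e.
by exists (a (inv g) y) => //; exists g; [split | exact: actK].
Qed.

Lemma act_funDl f g xi : fin_fibres f -> fin_fibres g ->
  act_fun (fadd f g) xi = fun y => act_fun f xi y + act_fun g xi y.
Proof.
move=> [ff1 _] [fg1 _]; apply/funext => y; rewrite /act_fun.
case: (pselect (S y)) => [Sy|nS]; last by rewrite !asboolF ?addr0.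
rewrite !asboolT // (eq_fsbigr (fun k => f k * xi (a (inv k) y) + g k * xi (a (inv k) y))).
  apply: (@fsbig_split_supp _ _ _
    ([set k | f k != 0 /\ grng k = p y] `|` [set k | g k != 0 /\ grng k = p y])).
  - by rewrite finite_setU.
  - by move=> k /= e; rewrite mulf_eq0 negb_or => /andP [? _]; left.
  - by move=> k /= e; rewrite mulf_eq0 negb_or => /andP [? _]; right.
by move=> k _; rewrite /fadd mulrDl.
Qed.

Lemma act_funDr f xi xi' : fin_fibres f ->
  act_fun f (fun t => xi t + xi' t) = fun y => act_fun f xi y + act_fun f xi' y.
Proof.
move=> [ff1 _]; apply/funext => y; rewrite /act_fun.
case: (pselect (S y)) => [Sy|nS]; last by rewrite !asboolF ?addr0.
rewrite !asboolT // (eq_fsbigr (fun k => f k * xi (a (inv k) y) + f k * xi' (a (inv k) y))).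
  by apply: (@fsbig_split_supp _ _ _ [set k | f k != 0 /\ grng k = p y]) => // k /= e;
    rewrite mulf_eq0 negb_or => /andP [].
by move=> k _; rewrite mulrDr.
Qed.

Lemma act_fun_translate g xi al y : S y -> grng al = p y ->
  \sum_(k \in [set k | grng k = p y]) g (mul (inv al) k) * xi (a (inv k) y) =
  act_fun g xi (a (inv al) y).
Proof.
move=> Sy eal; have [Sz pz] := act_anchorV Sy eal.
rewrite /act_fun asboolT // pz.
rewrite (@reindex_fsbig_bij _ _ _ [set be | grng be = gdom al] _ (mul al)).
- apply: eq_fsbigr => be /set_mem /= ebe; have cab : gcomp al be by apply/gcompP.
  by rewrite gmulKV // ginvM // actM ?gdomV ?grngV.
- by move=> be /= ebe; rewrite grngM //; apply/gcompP.
- by move=> be be' /= e1 e2; apply: gmulI; apply/gcompP.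
- move=> k /= ek; exists (mul (inv al) k); split; last by rewrite gmulKVr // ek.
  by rewrite /= grngM ?grngV //; apply/gcompP; rewrite gdomV eal.
Qed.

Lemma act_fun_conv f g xi : fin_fibres f -> fin_fibres g ->
  act_fun (conv f g) xi = act_fun f (act_fun g xi).
Proof.
move=> [ff1 _] [fg1 _]; apply/funext => y; rewrite {1 2}/act_fun.
case: (pselect (S y)) => [Sy|nS]; last by rewrite !asboolF.
rewrite !asboolT //.
pose Ky := [set k | grng k = p y].
rewrite (eq_fsbigr
  (fun k => \sum_(al \in Ky) f al * g (mul (inv al) k) * xi (a (inv k) y))); last first.
  by move=> k /set_mem /= e; rewrite (convE _ _ ff1) mulr_fsuml e.
rewrite (exchange_fsbig_supp
  (A := \bigcup_(al in [set al | f al != 0 /\ grng al = p y])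
          [set mul al be | be in [set be | g be != 0 /\ grng be = gdom al]])
  (B := [set al | f al != 0 /\ grng al = p y])).
- apply: eq_fsbigr => al /set_mem /= eal.
  by rewrite -act_fun_translate // mulr_fsumr; apply: eq_fsbigr => k _; rewrite mulrA.
- by apply: bigcup_finite => // al _; apply: finite_image.
- exact: ff1.
move=> k al /= ek eal; rewrite !mulf_eq0 !negb_or => /andP [/andP [fa ga] _].
split => //; exists al => //; exists (mul (inv al) k); last by rewrite gmulKVr // ek eal.
by split => //; rewrite grngM ?grngV //; apply/gcompP; rewrite gdomV eal ek.
Qed.

Definition lact (f : G -> R) (x : M) : M := insubd (0 : M) (act_fun f x).

Lemma lactE f x : fin_fibres f -> (lact f x : X -> R) = act_fun f x.
Proof.
by move=> h; rewrite /lact insubd_finsupp //; apply: act_fun_finsupp => //; exact: finsupp_onP.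
Qed.

Lemma lactDr f (x y : M) : fin_fibres f -> lact f (x + y) = lact f x + lact f y.
Proof.
move=> hf; apply: finsuppP => t; rewrite fs_funD !lactE //.
by rewrite (_ : fs_fun (x + y) = fun t => x t + y t) // act_funDr.
Qed.

Lemma lactDl f g (x : M) : fin_fibres f -> fin_fibres g ->
  lact (fadd f g) x = lact f x + lact g x.
Proof.
move=> hf hg; apply: finsuppP => t.
by rewrite fs_funD !lactE ?act_funDl //; apply: fin_fibresD.
Qed.

Lemma lact_conv f g (x : M) : fin_fibres f -> fin_fibres g ->
  lact (conv f g) x = lact f (lact g x).
Proof.
move=> hf hg; apply: finsuppP => t; rewrite [in RHS]lactE //.
have -> : (lact g x : X -> R) = act_fun g x by rewrite lactE.
rewrite /lact -act_fun_conv // insubd_finsupp // act_fun_conv //.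
by do 2 apply: act_fun_finsupp => //; exact: finsupp_onP.
Qed.

Hypothesis Hample : ample G.

Lemma lact_left_module : left_module lact.
Proof.
have st := steinberg_fin_fibres Hample.
split.
- by move=> f g x /st hf /st hg; apply: lactDl.
- by move=> f x y /st hf; apply: lactDr.
- by move=> f g x /st hf /st hg; apply: lact_conv.
Qed.

Definition ract (x : M) (f : G -> R) : M := lact (fun g => f (inv g)) x.

Lemma ract_right_module : right_module ract.
Proof.
have st := steinberg_fin_fibres Hample.
split.
- by move=> f g x /st/fin_fibresV hf /st/fin_fibresV hg; apply: lactDl.
- by move=> f x y /st/fin_fibresV hf; apply: lactDr.
- move=> f g x /st hf /st hg.
  by rewrite /ract (convV hf hg) lact_conv //; exact: fin_fibresV.
Qed.

End ActionModule.

Section OrbitModule.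
Variables (G : TopGroupoid) (R : fieldType) (u : G).
Local Notation mul := (@gmul G).
Local Notation inv := (@ginv G).

Definition orbit : set G := [set w | exists k, gdom k = u /\ grng k = w].

Lemma orbit_act_anchor g y : orbit y -> gdom g = y -> orbit (grng g) /\ grng g = grng g.
Proof.
move=> [k [dk rk]] e; split => //; exists (mul g k).
have cgk : gcomp g k by apply/gcompP; rewrite e rk.
by rewrite gdomM // grngM.
Qed.

Lemma orbit_act_unit y : orbit y -> grng y = y.
Proof. by move=> [k [_ <-]]; rewrite grng_idem. Qed.

Lemma orbit_actM g h y : orbit y -> gdom h = y -> gdom g = grng h ->
  grng (mul g h) = grng g.
Proof. by move=> _ _ e; rewrite grngM //; apply/gcompP. Qed.

Definition orbit_action : gaction G G :=
  GAction orbit_act_anchor orbit_act_unit orbit_actM.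

Local Notation N := (finsupp R orbit).
Local Notation actN := (@lact G R G orbit_action).
Local Notation delta := (@fs_delta _ R orbit).

Lemma orbit_unit_space y : orbit y -> unit_space y.
Proof. by move=> [k [_ <-]]; apply: unit_space_of_grng. Qed.

Lemma orbit_u : unit_space u -> orbit u.
Proof. by move=> uu; exists u; rewrite (unit_spaceP _).1 // unit_space_grng. Qed.

Hypotheses (Hample : ample G) (Hhaus : hausdorff G).

Lemma lact_orbit_scaled_indic (xi : N) c B g : compact_bisection B -> B g ->
  (forall al, B al -> xi (gdom al) != 0 -> al = g) ->
  (actN (scaled_indic c B) xi : G -> R) = delta_fun (c * xi (gdom g)) (grng g).
Proof.
move=> oB Bg hB; rewrite lactE; last first.
  by apply: (steinberg_fin_fibres Hample); apply: in_steinberg_scaled_indic.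
have supp al : scaled_indic c B al * xi (gdom al) != 0 -> al = g.
  rewrite /scaled_indic; case: asboolP => [Bal|_]; last by rewrite mul0r eqxx.
  by rewrite mulf_eq0 negb_or => /andP [_]; exact: hB.
apply/funext => w; rewrite /act_fun /delta_fun /=.
case: (pselect (orbit w)) => [Ow|nO]; last first.
  rewrite asboolF //; case: (eqVneq w (grng g)) => // e.
  case: (eqVneq (xi (gdom g)) 0) => [->|nz]; first by rewrite mulr0.
  have [] := orbit_act_anchor ((finsupp_onP xi).2 _ nz) (erefl _).
  by rewrite -e.
rewrite asboolT //; case: (eqVneq w (grng g)) => [->|ne].
  rewrite (fsbig_single (x0 := g)) //=; first by rewrite /scaled_indic asboolT // grngV.
  move=> al /= e neq; rewrite grngV; apply/eqP; apply: contraT => /supp.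
  by move/neq.
apply: fsbig1 => al /= e; rewrite grngV; apply/eqP; apply: contraT => /supp eal.
by move/eqP: ne; rewrite -e eal.
Qed.

Lemma lact_orbit_delta c B y : compact_bisection B -> B y -> orbit y ->
  actN (scaled_indic 1 B) (delta c y) = delta c y.
Proof.
move=> oB By Oy; have uy := orbit_unit_space Oy.
apply: finsuppP => t; rewrite (@lact_orbit_scaled_indic _ 1 B y oB By).
  by rewrite fs_deltaE // mul1r (unit_spaceP _).1 // unit_space_grng // /delta_fun eqxx.
move=> al Bal; rewrite fs_deltaE // /delta_fun.
case: (eqVneq (gdom al) y) => [e _|_]; last by rewrite eqxx.
by apply: (cbis_gdom_inj oB) => //; rewrite e (unit_spaceP _).1.
Qed.

Lemma orbit_left_unital : left_unital actN.
Proof.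
move=> n; have [Bf hBf] := choice (cbis_cover Hample).
have [s [hs ->]] := finsupp_decomp n.
exists (map (fun y => (scaled_indic 1 (Bf y), delta (n y) y)) s); split.
  by move=> q /In_mem /mapP [y ys ->]; apply: in_steinberg_scaled_indic => //; case: (hBf y).
rewrite big_map; apply: eq_big_seq => y ys /=.
by rewrite lact_orbit_delta //; [case: (hBf y) | case: (hBf y) | exact: hs].
Qed.

Lemma orbit_left_module : left_module actN.
Proof. exact: lact_left_module. Qed.

(* A compact bisection around an arrow from w0 to w, whose sources meet the
   support of xi only at w0, carries xi to a multiple of δ_w. *)
Lemma orbit_submodule_delta (S : N -> Prop) (xi : N) w0 c w :
  left_submodule actN S -> S xi -> xi w0 != 0 -> orbit w -> S (delta c w).
Proof.
move=> [_ _ _ Sact] Sxi nzw0 [k [dk rk]].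
have [k0 [dk0 rk0]] : orbit w0 := (finsupp_onP xi).2 _ nzw0.
pose g := mul k (inv k0).
have ckk : gcomp k (inv k0) by apply/gcompP; rewrite grngV dk dk0.
have dg : gdom g = w0 by rewrite /g gdomM // gdomV.
have rg : grng g = w by rewrite /g grngM.
have [V [oV Vw0 hV]] := finite_set_isolated Hhaus w0 (finsupp_onP xi).1.
have [B0 [oB0 B0g]] := cbis_cover Hample g.
have oW : topen (fun al => B0 al /\ V (gdom al)) := cbis_gdom_open oB0 oV.
have [B [oB Bg BW]] := ample_cbis Hample oW (conj B0g (eq_ind_r V Vw0 dg)).
have hB al : B al -> xi (gdom al) != 0 -> al = g.
  move=> Bal nzal; apply: (cbis_gdom_inj oB) => //.
  by rewrite dg; apply: hV => //; case: (BW al Bal).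
have -> : delta c w = actN (scaled_indic ((xi w0)^-1 * c) B) xi.
  apply: finsuppP => t; rewrite (lact_orbit_scaled_indic _ oB Bg hB).
  by rewrite dg rg fs_deltaE; [rewrite mulrAC mulVf // mul1r | exists k].
by apply: Sact => //; apply: in_steinberg_scaled_indic.
Qed.

Lemma orbit_simple : unit_space u -> simple_left actN.
Proof.
move=> uu; split.
  exists (delta 1 u) => /(congr1 (fun n : N => n u)).
  rewrite fs_deltaE ?fs_fun0; last exact: orbit_u.
  by rewrite /delta_fun eqxx => /eqP; rewrite oner_eq0.
move=> S SS; case: (pselect (exists xi, S xi /\ xi <> 0)) => [[xi [Sxi nz]]|h]; last first.
  by left=> n Sn; apply: contrapT => nn; apply: h; exists n.
right=> n; have [w0 nzw0] := finsupp_neq0 (introN eqP nz).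
have [s [hs ->]] := finsupp_decomp n.
have [S0 SD _ _] := SS; elim: s hs => [|y s IH] hs; first by rewrite big_nil.
rewrite big_cons; apply: SD; last by apply: IH => z zs; apply: hs; rewrite in_cons zs orbT.
by apply: (orbit_submodule_delta _ SS Sxi nzw0); apply: hs; rewrite in_cons eqxx.
Qed.

End OrbitModule.

Section ArrowModule.
Variables (G : TopGroupoid) (R : fieldType) (u : G).
Local Notation mul := (@gmul G).
Local Notation inv := (@ginv G).

Definition arrows_from : set G := [set h | gdom h = u].

Lemma arrows_from_act_anchor g y : arrows_from y -> gdom g = grng y ->
  arrows_from (mul g y) /\ grng (mul g y) = grng g.
Proof.
move=> dy e; have c : gcomp g y by apply/gcompP.
by split; [rewrite /arrows_from /= gdomM | rewrite grngM].
Qed.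

Lemma arrows_from_act_unit y : arrows_from y -> mul (grng y) y = y.
Proof. by move=> _; rewrite gmul_grng. Qed.

Lemma arrows_from_actM g h y : arrows_from y -> gdom h = grng y -> gdom g = grng h ->
  mul (mul g h) y = mul g (mul h y).
Proof. by move=> _ e1 e2; apply: gmulA; apply/gcompP. Qed.

Definition arrows_from_action : gaction G G :=
  GAction arrows_from_act_anchor arrows_from_act_unit arrows_from_actM.

Local Notation M := (finsupp R arrows_from).
Local Notation ractM := (@ract G R G arrows_from_action).
Local Notation delta := (@fs_delta _ R arrows_from).

Hypotheses (Hample : ample G) (Hhaus : hausdorff G).

Lemma ract_arrows_delta c k f : gdom k = u -> in_steinberg f ->
  (ractM (delta c k) f : G -> R) =
  fun h => if `[< gdom h = u >] then f (mul k (inv h)) * c else 0.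
Proof.
move=> dk sf; rewrite /ract lactE; last exact/fin_fibresV/(steinberg_fin_fibres Hample).
apply/funext => h; rewrite /act_fun fs_deltaE //=.
case: (pselect (gdom h = u)) => [dh|ndh]; last by rewrite !asboolF.
rewrite !asboolT //.
have chk : gcomp h (inv k) by apply/gcompP; rewrite grngV dh dk.
have ckh : gcomp k (inv h) by apply/gcompP; rewrite grngV dh dk.
rewrite (fsbig_single (x0 := mul h (inv k))) /=; last 2 first.
- by rewrite grngM.
- move=> g /= e ne; rewrite /delta_fun.
  case: (eqVneq (mul (inv g) h) k) => [ek|]; last by rewrite mulr0.
  have cgk : gcomp g k.
    by apply/gcompP; rewrite -ek grngM ?grngV //; apply/gcompP; rewrite gdomV.
  have egk : mul g k = h by rewrite -ek gmulKVr.
  by case: ne; rewrite -egk gmulKr.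
rewrite (ginvM chk) ginvK /delta_fun (gmulA ckh (gcompVx h)) -/(gdom h) dh -dk.
by rewrite gmul_gdom eqxx.
Qed.

Lemma ract_arrows_delta_indic c y B : gdom y = u -> compact_bisection B -> B (grng y) ->
  ractM (delta c y) (scaled_indic 1 B) = delta c y.
Proof.
move=> dy oB By; apply: finsuppP => h.
rewrite ract_arrows_delta //; last exact: in_steinberg_scaled_indic.
rewrite fs_deltaE // /delta_fun /scaled_indic.
case: (pselect (gdom h = u)) => [dh|ndh]; last first.
  by rewrite asboolF //; case: (eqVneq h y) => // e; case: ndh; rewrite e.
rewrite asboolT //; case: (eqVneq h y) => [->|ne]; first by rewrite -/(grng y) asboolT ?mul1r.
case: (pselect (B (mul y (inv h)))) => Bh; last by rewrite asboolF ?mul0r.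
have cyh : gcomp y (inv h) by apply/gcompP; rewrite grngV dh dy.
have e : mul y (inv h) = grng y.
  by apply: (cbis_grng_inj oB) => //; rewrite grngM // grng_idem.
by case/eqP: ne; apply: ginv_inj; rewrite -(gmulKV cyh) e -(gdomV y) gmul_gdom.
Qed.

Lemma arrows_right_module : right_module ractM.
Proof. exact: ract_right_module. Qed.

Lemma arrows_right_unital : right_unital ractM.
Proof.
move=> m; have [Bf hBf] := choice (cbis_cover Hample).
have [s [hs ->]] := finsupp_decomp m.
exists (map (fun y => (delta (m y) y, scaled_indic 1 (Bf (grng y)))) s); split.
  move=> q /In_mem /mapP [y ys ->].
  by apply: in_steinberg_scaled_indic => //; case: (hBf (grng y)).
rewrite big_map; apply: eq_big_seq => y ys /=.
by rewrite ract_arrows_delta_indic //; [exact: hs | case: (hBf (grng y)) ..].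
Qed.

End ArrowModule.

Section Pairing.
Variables (G : TopGroupoid) (R : fieldType) (u : G).
Hypothesis Hample : ample G.
Local Notation mul := (@gmul G).
Local Notation inv := (@ginv G).
Local Notation M := (finsupp R (arrows_from u)).
Local Notation N := (finsupp R (orbit u)).
Local Notation ractM := (@ract G R G (arrows_from_action u)).
Local Notation actN := (@lact G R G (orbit_action u)).
Local Notation deltaM := (@fs_delta _ R (arrows_from u)).
Local Notation deltaN := (@fs_delta _ R (orbit u)).

Definition pairing (m : M) (n : N) : R := \sum_(h \in arrows_from u) m h * n (grng h).

Lemma pairingDl (m m' : M) n : pairing (m + m') n = pairing m n + pairing m' n.
Proof.
rewrite /pairing -(@fsbig_split_supp _ _ _ ([set h | m h != 0] `|` [set h | m' h != 0])).
- by apply: eq_fsbigr => h _; rewrite fs_funD mulrDl.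
- by rewrite finite_setU; split; [exact: (finsupp_onP m).1 | exact: (finsupp_onP m').1].
- by move=> h _; rewrite mulf_eq0 negb_or => /andP [nz _]; left.
- by move=> h _; rewrite mulf_eq0 negb_or => /andP [nz _]; right.
Qed.

Lemma pairingDr (m : M) n n' : pairing m (n + n') = pairing m n + pairing m n'.
Proof.
rewrite /pairing -(@fsbig_split_supp _ _ _ [set h | m h != 0]).
- by apply: eq_fsbigr => h _; rewrite fs_funD mulrDr.
- exact: (finsupp_onP m).1.
- by move=> h _; rewrite mulf_eq0 negb_or => /andP [].
- by move=> h _; rewrite mulf_eq0 negb_or => /andP [].
Qed.

Lemma pairing_ract_delta c k f n : gdom k = u -> in_steinberg f ->
  pairing (ractM (deltaM c k) f) n = pairing (deltaM c k) (actN f n).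
Proof.
move=> dk sf; rewrite /pairing (ract_arrows_delta Hample) //.
rewrite (eq_fsbigr (fun h => f (mul k (inv h)) * c * n (grng h))); last first.
  by move=> h /set_mem dh; rewrite asboolT.
rewrite [RHS](fsbig_single (x0 := k)) //; last first.
  by move=> h _ ne; rewrite fs_deltaE // /delta_fun; case: eqVneq => // _; rewrite mul0r.
rewrite fs_deltaE // /delta_fun eqxx lactE; last exact: steinberg_fin_fibres.
rewrite /act_fun asboolT; last by exists k.
rewrite (@reindex_fsbig_bij _ _ _ [set al | grng al = grng k] (arrows_from u)
  (fun al => mul (inv al) k)).
- rewrite mulr_fsumr; apply: eq_fsbigr => al /set_mem /= e.
  have cak : gcomp (inv al) k by apply/gcompP; rewrite gdomV.
  by rewrite (ginvM cak) ginvK gmulKVr // (grngM cak) !grngV mulrAC mulrC.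
- by move=> al /= e; rewrite /arrows_from /= gdomM //; apply/gcompP; rewrite gdomV.
- move=> al al' /= e1 e2 e.
  have c1 : gcomp (inv al) k by apply/gcompP; rewrite gdomV.
  by apply: ginv_inj; rewrite -(gmulKr c1) e gmulKr //; apply/gcompP; rewrite gdomV.
- move=> h /= dh; exists (mul k (inv h)).
  have ckh : gcomp k (inv h) by apply/gcompP; rewrite grngV dh dk.
  have chk : gcomp h (inv k) by apply/gcompP; rewrite grngV dh dk.
  split; first by rewrite /= grngM.
  by rewrite (ginvM ckh) ginvK (gmulA chk (gcompVx k)) -/(gdom k) dk -dh gmul_gdom.
Qed.

Lemma pairing_balanced : balanced ractM actN pairing.
Proof.
split; [exact: pairingDl | exact: pairingDr |] => m f n sf.
have [s [hs ->]] := finsupp_decomp m.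
have raddD m1 m2 : ractM (m1 + m2) f = ractM m1 f + ractM m2 f.
  by case: (arrows_right_module R u Hample) => _ + _; apply.
have pairing_sum (n0 : N) (F : G -> M) :
    pairing (\sum_(y <- s) F y) n0 = \sum_(y <- s) pairing (F y) n0.
  exact: (@morph_add_sum _ _ (pairing^~ n0) (fun m1 m2 => pairingDl m1 m2 n0)).
rewrite (@morph_add_sum _ _ (ractM^~ f) raddD) !pairing_sum.
by apply: eq_big_seq => y ys; apply: pairing_ract_delta => //; apply: hs.
Qed.

Lemma pairing_delta : unit_space u -> pairing (deltaM 1 u) (deltaN 1 u) = 1.
Proof.
move=> uu; have du : gdom u = u := (unit_spaceP u).1 uu.
rewrite /pairing (fsbig_single (x0 := u)) //.
  rewrite (unit_space_grng uu) fs_deltaE // fs_deltaE; last exact: orbit_u.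
  by rewrite /delta_fun eqxx mulr1.
by move=> h _ ne; rewrite fs_deltaE // /delta_fun; case: eqVneq => // _; rewrite mul0r.
Qed.

End Pairing.

Section RightTranslation.
Variables (G : TopGroupoid) (R : fieldType) (u x : G).
Hypotheses (Hample : ample G) (hxd : gdom x = u) (hxr : grng x = u).
Local Notation mul := (@gmul G).
Local Notation inv := (@ginv G).
Local Notation M := (finsupp R (arrows_from u)).
Local Notation ractM := (@ract G R G (arrows_from_action u)).
Local Notation actN := (@lact G R G (orbit_action u)).
Local Notation deltaM := (@fs_delta _ R (arrows_from u)).
Local Notation deltaN := (@fs_delta _ R (orbit u)).

Definition rtrans_fun (m : G -> R) : G -> R :=
  fun h => if `[< gdom h = u >] then m (mul h (inv x)) else 0.

Lemma rtrans_finsupp (m : M) : finsupp_on (arrows_from u) (rtrans_fun m).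
Proof.
have [fm pm] := finsupp_onP m; rewrite /rtrans_fun; split; last first.
  by move=> h; case: (pselect (gdom h = u)) => [//|n]; rewrite asboolF ?eqxx.
apply: (sub_finite_set _ (finite_image (mul^~ x) fm)) => h /=.
case: (pselect (gdom h = u)) => [dh|n]; last by rewrite asboolF ?eqxx.
rewrite asboolT // => nz; exists (mul h (inv x)) => //.
have chx : gcomp h (inv x) by apply/gcompP; rewrite grngV dh hxd.
by have := gmulKr chx; rewrite ginvK.
Qed.

Definition rtrans (m : M) : M := mkfinsupp (rtrans_finsupp m).

Lemma rtransD (m m' : M) : rtrans (m + m') = rtrans m + rtrans m'.
Proof.
apply: finsuppP => h; rewrite fs_funD /= /rtrans_fun.
by case: (pselect (gdom h = u)) => [dh|n]; [rewrite !asboolT | rewrite !asboolF ?addr0].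
Qed.

Lemma rtrans_ract (m : M) f : in_steinberg f -> rtrans (ractM m f) = ractM (rtrans m) f.
Proof.
move=> sf; have hf : fin_fibres (fun g => f (inv g)).
  exact/fin_fibresV/(steinberg_fin_fibres Hample).
apply: finsuppP => h; rewrite /= /rtrans_fun /ract !lactE // /act_fun /=.
case: (pselect (gdom h = u)) => [dh|n]; last by rewrite !asboolF.
have chx : gcomp h (inv x) by apply/gcompP; rewrite grngV dh hxd.
rewrite !asboolT ?(grngM chx) //; last by rewrite /arrows_from /= gdomM // gdomV.
apply: eq_fsbigr => g /set_mem /= e.
have cgh : gcomp (inv g) h by apply/gcompP; rewrite gdomV.
by rewrite /rtrans_fun asboolT ?gdomM // (gmulA cgh chx).
Qed.

Definition rtrans_sub1 (m : M) : M := rtrans m - m.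

Lemma rtrans_sub1D (m m' : M) : rtrans_sub1 (m + m') = rtrans_sub1 m + rtrans_sub1 m'.
Proof. by rewrite /rtrans_sub1 rtransD opprD addrACA. Qed.

Lemma rtrans_sub1_linear : right_linear ractM ractM rtrans_sub1.
Proof.
have [_ raddD _] := arrows_right_module R u Hample.
split=> [|m f sf]; first exact: rtrans_sub1D.
rewrite /rtrans_sub1 rtrans_ract // (raddD _ _ _ sf).
by rewrite (@morph_addN _ _ (ractM^~ f) (fun m1 m2 => raddD f m1 m2 sf)).
Qed.

Variable B : G -> Prop.
Hypotheses (Hhaus : hausdorff G) (oB : compact_bisection B) (Bx : B (inv x)).

(* Both sides are δ_x: x^-1 is the only arrow of B with range u. *)
Lemma rtrans_delta : rtrans (deltaM 1 u) = ractM (deltaM 1 u) (scaled_indic 1 B).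
Proof.
have du : gdom u = u by rewrite -hxd gdom_idem.
apply: finsuppP => h; rewrite (ract_arrows_delta Hample) //; last first.
  exact: in_steinberg_scaled_indic.
rewrite /= /rtrans_fun; case: (pselect (gdom h = u)) => [dh|ndh]; last by rewrite !asboolF.
rewrite !asboolT // fs_deltaE // /delta_fun /scaled_indic mulr1.
have -> : mul u (inv h) = inv h by rewrite -dh -grngV gmul_grng.
have chx : gcomp h (inv x) by apply/gcompP; rewrite grngV dh hxd.
case: (eqVneq h x) => [->|ne]; first by rewrite -/(grng x) hxr eqxx asboolT.
rewrite asboolF; last first.
  move=> Bh; case/eqP: ne; apply: ginv_inj.
  by apply: (cbis_grng_inj oB) => //; rewrite !grngV dh hxd.
case: eqP => // e; case/eqP: ne.
by have := gmulKr chx; rewrite ginvK e -hxr gmul_grng.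
Qed.

Lemma lact_orbit_delta_u : actN (scaled_indic 1 B) (deltaN 1 u) = deltaN 1 u.
Proof.
have Ou : orbit u u by exists x.
have hB al : B al -> deltaN 1 u (gdom al) != 0 -> al = inv x.
  move=> Bal; rewrite fs_deltaE // /delta_fun; case: (eqVneq (gdom al) u) => [e _|_].
    by apply: (cbis_gdom_inj oB) => //; rewrite e gdomV hxr.
  by rewrite eqxx.
apply: finsuppP => t; rewrite (lact_orbit_scaled_indic Hample Hhaus _ oB Bx hB).
by rewrite fs_deltaE // gdomV grngV hxr hxd /delta_fun eqxx mulr1.
Qed.

Lemma tensor_zero_rtrans_sub1_delta :
  tensor_zero ractM actN (tmap rtrans_sub1 [:: (deltaM 1 u, deltaN 1 u)]).
Proof.
move=> Z bt [btDl _ btbal]; rewrite /tmap big_cons big_nil addr0 /=.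
rewrite /rtrans_sub1 btDl rtrans_delta btbal; last exact: in_steinberg_scaled_indic.
by rewrite lact_orbit_delta_u (@morph_addN _ _ (bt^~ _) (fun m1 m2 => btDl m1 m2 _)) subrr.
Qed.

End RightTranslation.

Section OrderedGroupTheory.
Variable Gam : OrderedGroup.
Local Notation "a * b" := (ogmul a b).
Local Notation e := (ogone Gam).

Lemma ogmulI (a b b' : Gam) : a * b = a * b' -> b = b'.
Proof.
by move=> /(congr1 (ogmul (oginv a))); rewrite -!ogmulA ogmulVg !ogmul1g.
Qed.

Lemma og_idem (a : Gam) : a = a * a -> a = e.
Proof. by move=> h; apply: (@ogmulI a); rewrite ogmulg1 -h. Qed.

Lemma strict_chain_inj (T : Type) (le : T -> T -> Prop) (s : nat -> T) :
  (forall a, le a a) -> (forall a b, le a b -> le b a -> a = b) ->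
  (forall a b c, le a b -> le b c -> le a c) ->
  (forall n, le (s n) (s n.+1)) -> (forall n, s n <> s n.+1) -> injective s.
Proof.
move=> refl anti trans hle hne.
have hk n k : le (s n) (s (n + k)%N).
  by elim: k => [|k IH]; [rewrite addn0 | rewrite addnS; apply: trans IH (hle _)].
have lt n m : (n < m)%N -> s n <> s m.
  move=> nm e1; apply: (hne n); apply: anti; first exact: hle.
  by rewrite e1 -(subnKC nm); exact: hk.
by move=> n m e1; case: (ltngtP n m) => // /lt; [move/(_ e1) | move/(_ (esym e1))].
Qed.

(* Γ is torsion-free: right multiplication by d <> e moves strictly up or down. *)
Lemma ogmul_iter_inj (d : Gam) (s : nat -> Gam) : d <> e ->
  (forall n, s n.+1 = s n * d) -> injective s.
Proof.
move=> nd hs.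
have hne n : s n <> s n.+1.
  by rewrite hs => h; apply: nd; apply: (@ogmulI (s n)); rewrite ogmulg1.
case: (ogle_total e d) => hd.
- apply: (@strict_chain_inj _ (@ogle Gam)) => //;
    [exact: ogle_refl | exact: ogle_anti | exact: ogle_trans |].
  by move=> n; rewrite hs -{1}(ogmulg1 (s n)); apply: ogle_mull.
- apply: (@strict_chain_inj _ (fun a b => ogle b a)) => //.
  + exact: ogle_refl.
  + by move=> a b h1 h2; apply: ogle_anti.
  + by move=> a b c h1 h2; apply: ogle_trans h2 h1.
  + by move=> n; rewrite hs -{2}(ogmulg1 (s n)); apply: ogle_mull.
Qed.

End OrderedGroupTheory.

Lemma finite_set_nat_inj (T : eqType) (S : set T) (f : nat -> T) :
  finite_set S -> injective f -> ~ (forall n, S (f n)).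
Proof.
move=> /finite_seqP [l e] fi hS.
have sub : {subset map f (iota 0 (size l).+1) <= l}.
  by move=> y /mapP [n _ ->]; have := hS n; rewrite e.
have u1 : uniq (map f (iota 0 (size l).+1)) by rewrite (map_inj_uniq fi) iota_uniq.
have := uniq_leq_size u1 sub.
by rewrite size_map size_iota ltnn.
Qed.

Section Grading.
Variables (Gam : OrderedGroup) (G : TopGroupoid) (R : fieldType) (c : G -> Gam).
Hypothesis Hgrad : grading c.
Local Notation mul := (@gmul G).
Local Notation inv := (@ginv G).

Lemma grading_gdom y : c (gdom y) = ogone Gam.
Proof.
apply: og_idem; rewrite -Hgrad.2; last by apply/gcompP; rewrite gdom_idem grng_gdom.
by rewrite -{1}(gmul_gdom (gdom y)) gdom_idem.
Qed.

Lemma gradingV_neq1 x : c x <> ogone Gam -> c (inv x) <> ogone Gam.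
Proof.
move=> hcx h; apply: hcx; have := grading_gdom x.
by rewrite /gdom Hgrad.2 ?h ?ogmul1g //; exact: gcompVx.
Qed.

Variables (u x : G).
Hypotheses (hxd : gdom x = u) (hxr : grng x = u) (hcx : c x <> ogone Gam).

(* A fixed point m of the translation would be constant on the pairwise
   distinct arrows h x^-n, contradicting finiteness of its support. *)
Lemma rtrans_sub1_inj (m : finsupp R (arrows_from u)) : rtrans_sub1 hxd m = 0 -> m = 0.
Proof.
move=> /eqP; rewrite subr_eq0 => /eqP hrm; apply/eqP; apply: contraT => nz.
have [h0 nh0] := finsupp_neq0 nz; have [fm pm] := finsupp_onP m.
pose hs n := iter n (mul^~ (inv x)) h0.
have hs_orbit n : gdom (hs n) = u /\ m (hs n) = m h0.
  elim: n => [|n [dn mn]]; first by split=> //; exact: pm.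
  have chx : gcomp (hs n) (inv x) by apply/gcompP; rewrite grngV dn hxd.
  split; first by rewrite /= gdomM // gdomV.
  have := congr1 (fun z => fs_fun z (hs n)) hrm.
  by rewrite -mn /= /rtrans_fun asboolT.
have hs_inj : injective hs.
  suff : injective (c \o hs) by move=> fi n n' e; apply: fi; rewrite /= e.
  apply: (ogmul_iter_inj (gradingV_neq1 hcx)) => n /=; rewrite Hgrad.2 //.
  by apply/gcompP; rewrite grngV (hs_orbit n).1 hxd.
by exfalso; apply: (finite_set_nat_inj fm hs_inj) => n /=; rewrite (hs_orbit n).2.
Qed.

Lemma rtrans_sub1_exact (m : finsupp R (arrows_from u)) :
  (exists m1 : finsupp R (arrows_from u), m = (fun _ => 0) m1) <-> rtrans_sub1 hxd m = 0.
Proof.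
split=> [[_ ->] | /rtrans_sub1_inj ->]; last by exists 0.
exact: morph_add0 (rtrans_sub1D hxd).
Qed.

End Grading.

Lemma right_linear0 (G : TopGroupoid) (R : fieldType) (M M' : zmodType)
    (r : M -> (G -> R) -> M) (r' : M' -> (G -> R) -> M') :
  right_module r' -> right_linear r r' (fun _ => 0).
Proof.
case=> _ r'D _; split=> [m m' | m f sf]; first by rewrite addr0.
by rewrite (@morph_add0 _ _ (r'^~ f) (fun m1 m2 => r'D f m1 m2 sf)).
Qed.

Lemma not_tensor_zero_neg_delta (G : TopGroupoid) (R : fieldType) (u : G)
    (s : seq (finsupp R (arrows_from u) * finsupp R (orbit u))) :
  ample G -> unit_space u ->
  ~ tensor_zero (@ract G R G (arrows_from_action u)) (@lact G R G (orbit_action u))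
      (tmap (fun _ => 0) s ++ tneg [:: (fs_delta _ 1 u, fs_delta _ 1 u)]).
Proof.
move=> Hample uu /(_ _ _ (pairing_balanced R u Hample)).
have pairing0 (n : finsupp R (orbit u)) : pairing 0 n = 0.
  by rewrite /pairing fsbig1 // => h _; rewrite fs_fun0 mul0r.
rewrite big_cat big1_seq ?add0r => [|[m n] /= /mapP [q _ [-> ->]]] //=.
rewrite big_cons big_nil addr0 /=.
rewrite (@morph_addN _ _ ((@pairing G R u)^~ _) (fun m1 m2 => pairingDl m1 m2 _)).
rewrite pairing_delta //.
by rewrite add0r => /eqP; rewrite oppr_eq0 oner_eq0.
Qed.

Theorem proposition3p3 (Gam : OrderedGroup) (G : TopGroupoid) (c : G -> Gam)
    (R : fieldType) :
  ample G -> hausdorff G -> grading c -> left_SF G R ->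
  forall u : G, unit_space u -> aperiodic_unit c u.
Proof.
move=> Hample Hhaus Hgrad HSF u uu x hxd hxr; apply: contrapT => hcx.
have [B [oB Bx]] := cbis_cover Hample (ginv x).
have flat := HSF _ _ (orbit_left_module R u Hample) (orbit_left_unital Hample Hhaus)
  (orbit_simple R Hample Hhaus uu).
have rm := arrows_right_module R u Hample.
have ru := arrows_right_unital (R := R) (u := u) Hample Hhaus.
have psi_lin := rtrans_sub1_linear R Hample hxd hxr.
have [_ /(_ (tensor_zero_rtrans_sub1_delta Hample hxd hxr Hhaus oB Bx)) [s]] :=
  flat _ _ _ _ _ _ _ _ rm ru rm ru rm ru (right_linear0 _ rm) psi_lin
    (rtrans_sub1_exact Hgrad hxd hxr hcx)
    [:: (fs_delta _ 1 u, fs_delta _ 1 u)].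
exact: not_tensor_zero_neg_delta.
Qed.
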